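(* For any eviction algorithm $\mathcal Q$ and any input (for randomized $\mathcal Q$: any realization of its random bits) there exists an eviction graph $H_{\mathcal Q}$ with edge set $E$ and a coloring of its edges such that: (1) if two edges $(i,j)$ and $(i',j')$ have the same color then $i=i'$; (2) if two distinct edges $(i,j)$ and $(i,j')$ have the same color then the evictions of $\sigma(j)$ and $\sigma(j')$ do not overlap; (3) the number of colors used is at most $\mathrm{OPT}$; and moreover $\mathrm{OBJ}_{\mathcal Q}\le\mathrm{OPT}+|E|$.
   Context: Caching setting: cache of capacity $k$, requests $\sigma(1),\dots,\sigma(T)$ processed online from an empty cache; on a miss with full cache one cached page is evicted. $\mathrm{OBJ}_{\mathcal Q}$ = number of misses of $\mathcal Q$, $\mathrm{OPT}$ = number of misses of Belady's optimal offline algorithm. $\nu(t)=\min\{s>t:\sigma(s)=\sigma(t)\}$ ($T+1$ if none). Cached pages are identified by the index of their most recent request: $\mathcal I_{\mathcal Q}(t)$ is the set of indices $\max\{t'\le t:\sigma(t')=s\}$ over pages $s$ cached after processing request $t$; ''the eviction of $\sigma(j)$'' means the (unique) time at which $\mathcal Q$ evicts the page $\sigma(j)$ while $j$ is its index in $\mathcal I_{\mathcal Q}$. Two evictions, of $\sigma(j)$ at time $t_1$ and of $\sigma(j')$ at time $t_2>t_1$, do not overlap if $\nu(j)\le t_2$ (i.e. the eviction triggered by the first one, at time $\nu(j)$, happens no later than the second). An eviction graph $H_{\mathcal Q}$ is a directed graph on vertex set $\{1,\dots,T\}$ such that for every edge $(i,j)$ there is a time $t+1$ at which $\mathcal Q$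 evicts $\sigma(j)$ with $j\in\mathcal I_{\mathcal Q}(t)$ while $i\in\mathcal I_{\mathcal Q}(t)$ and $\nu(i)>\nu(j)$; moreover for each $j$ there is at most one edge of the form $(i,j)$. *)

From mathcomp Require Import all_boot.
From mathcomp Require Import finmap.
Set Implicit Arguments. Unset Strict Implicit. Unset Printing Implicit Defensive.
Local Open Scope fset_scope.

(* Pages are natural numbers.  A request sequence is sigma : nat -> nat,
   of which only sigma 1, ..., sigma T are relevant (times are 1..T).
   A cache state is a finite set of pages. *)

Definition valid_step (k p : nat) (C C' : {fset nat}) : Prop :=
  if p \in C then C' = C
  else if (#|` C| < k)%N then C' = p |` C
  else exists2 q, q \in C & C' = p |` (C `\ q).

(* A run (execution) of an eviction algorithm on sigma(1..T): C t is the
   cache content after processing request t, starting from the empty cache.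
   Every run of any (deterministic, or randomized with fixed random bits)
   eviction algorithm is such a run. *)
Definition valid_run (k T : nat) (sigma : nat -> nat) (C : nat -> {fset nat}) : Prop :=
  C 0%N = fset0 /\
  forall t, (1 <= t <= T)%N -> valid_step k (sigma t) (C t.-1) (C t).

Definition misses (T : nat) (sigma : nat -> nat) (C : nat -> {fset nat}) : nat :=
  count (fun t => sigma t \notin C t.-1) (iota 1 T).

Definition is_OPT (k T : nat) (sigma : nat -> nat) (m : nat) : Prop :=
  (exists2 C, valid_run k T sigma C & misses T sigma C = m) /\
  (forall C, valid_run k T sigma C -> (m <= misses T sigma C)%N).

(* nu(t) = min { s > t : sigma s = sigma t }  (s <= T), or T+1 if none. *)
Definition nu (T : nat) (sigma : nat -> nat) (t : nat) : nat :=
  (t.+1 + find (fun s => sigma s == sigma t) (iota t.+1 (T - t)))%N.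

(* j \in I_Q(t): j is the index of the most recent request (up to t) of a page
   cached after processing request t. *)
Definition inI (sigma : nat -> nat) (C : nat -> {fset nat}) (t j : nat) : bool :=
  [&& (1 <= j <= t)%N, sigma j \in C t &
      all (fun s => sigma s != sigma j) (iota j.+1 (t - j))].

(* "the eviction of sigma(j)" happens at time u: at time u the page sigma(j)
   is evicted while j is its index in I_Q(u-1). *)
Definition evicted_at (T : nat) (sigma : nat -> nat) (C : nat -> {fset nat})
    (j u : nat) : bool :=
  [&& (1 <= u <= T)%N, sigma j \in C u.-1, sigma j \notin C u & inI sigma C u.-1 j].

Definition no_overlap (T : nat) (sigma : nat -> nat) (C : nat -> {fset nat})
    (j j' : nat) : Prop :=
  forall u1 u2, evicted_at T sigma C j u1 -> evicted_at T sigma C j' u2 ->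
    ((u1 < u2)%N -> (nu T sigma j <= u2)%N) /\
    ((u2 < u1)%N -> (nu T sigma j' <= u1)%N).

Definition eviction_edge (T : nat) (sigma : nat -> nat) (C : nat -> {fset nat})
    (e : nat * nat) : Prop :=
  exists u, [/\ evicted_at T sigma C e.2 u, inI sigma C u.-1 e.1 &
               (nu T sigma e.2 < nu T sigma e.1)%N].

Definition eviction_graph (T : nat) (sigma : nat -> nat) (C : nat -> {fset nat})
    (E : seq (nat * nat)) : Prop :=
  [/\ uniq E,
      forall e, e \in E -> [&& 1 <= e.1 <= T & 1 <= e.2 <= T]%N,
      forall e, e \in E -> eviction_edge T sigma C e &
      forall e e', e \in E -> e' \in E -> e.2 = e'.2 -> e = e'].

From mathcomp Require Import all_boot.
From mathcomp Require Import finmap.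
From mathcomp Require Import zify.
Set Implicit Arguments. Unset Strict Implicit. Unset Printing Implicit Defensive.
Local Open Scope fset_scope.
Local Open Scope nat_scope.

(* Run the given algorithm [C] alongside an optimal run [O], keeping a perfect
   matching [M] between the pages cached only by [C] and those cached only by
   [O]; a pair [(x, y)] is bad when [y] is requested before [x].  The potential
   inequality  misses C + #bad pairs <= misses O + |E|  is maintained step by
   step: a miss of [C] alone is paid by a bad pair disappearing (the request hits
   the partner [y] of some [x]), and when an eviction of [C] creates a bad pair
   [(x, y)] the edge from the last request of [x] to that of the evicted page is
   added to [E].  Such an edge gets the color of [x], a time at which [O] missed
   and re-matched [x]; hence at most OPT colors, edges of one color leave the same
   request, and every edge of that color is closed (its target re-requested)
   before the next one is created, which gives non-overlap. *)

Section Requests.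
Variables (T : nat) (sigma : nat -> nat).

Definition requested t z := has (fun s => sigma s == z) (iota 1 t).

Fixpoint last_request t z :=
  if t is t'.+1 then (if sigma t'.+1 == z then t'.+1 else last_request t' z) else 0.

(* [T.+1] when [z] is not requested in [t.+1 .. T]. *)
Definition next_request t z :=
  t.+1 + find (fun s => sigma s == z) (iota t.+1 (T - t)).

Lemma nuE j : nu T sigma j = next_request j (sigma j).
Proof. by []. Qed.

Lemma requestedS t z : requested t.+1 z = requested t z || (sigma t.+1 == z).
Proof. by rewrite /requested -[t.+1]addn1 iotaD has_cat /= orbF add1n addn1. Qed.

Lemma next_requestS t z : t < T -> sigma t.+1 != z ->
  next_request t z = next_request t.+1 z.
Proof.
move=> tT nz; rewrite /next_request.
have -> : T - t = (T - t.+1).+1 by lia.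
by cbn [iota find]; rewrite (negbTE nz); lia.
Qed.

Lemma next_request_now t : t < T -> next_request t (sigma t.+1) = t.+1.
Proof.
move=> tT; rewrite /next_request.
have -> : T - t = (T - t.+1).+1 by lia.
by cbn [iota find]; rewrite eqxx addn0.
Qed.

Lemma next_request_later t z : t < T -> sigma t.+1 != z -> t.+1 < next_request t z.
Proof.
move=> tT nz; rewrite /next_request.
have -> : T - t = (T - t.+1).+1 by lia.
by cbn [iota find]; rewrite (negbTE nz); lia.
Qed.

Lemma last_requestS t z : sigma t.+1 != z -> last_request t.+1 z = last_request t z.
Proof. by move=> /= /negbTE ->. Qed.

Lemma last_requestP t z : requested t z ->
  [/\ 1 <= last_request t z <= t, sigma (last_request t z) = z &
      all (fun s => sigma s != sigma (last_request t z))
          (iota (last_request t z).+1 (t - last_request t z))].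
Proof.
elim: t => [|t IH] //; rewrite requestedS /=.
case: eqP => [E _|ne /= Hs].
  by rewrite subnn; split=> //; lia.
rewrite orbF in Hs; have [H1 H2 H3] := IH Hs; split=> //; first lia.
have -> : t.+1 - last_request t z = (t - last_request t z).+1 by lia.
rewrite -[(t - _).+1]addn1 iotaD all_cat H3 /= andbT H2.
have -> : (last_request t z).+1 + (t - last_request t z) = t.+1 by lia.
exact/eqP.
Qed.

Lemma next_request_last t z : t <= T -> requested t z ->
  next_request (last_request t z) z = next_request t z.
Proof.
elim: t => [|t IH] // tT; rewrite requestedS.
case: (eqVneq (sigma t.+1) z) => [E _|ne Hs]; first by rewrite /= E eqxx.
rewrite orbF in Hs; rewrite last_requestS // IH //; last lia.
by rewrite next_requestS.
Qed.

Lemma nu_last_request t z : t <= T -> requested t z ->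
  nu T sigma (last_request t z) = next_request t z.
Proof.
move=> tT Hs; rewrite nuE.
by have [_ -> _] := last_requestP Hs; apply: next_request_last.
Qed.

Lemma inI_last_request (D : nat -> {fset nat}) t z : requested t z -> z \in D t ->
  inI sigma D t (last_request t z).
Proof.
move=> Hs Hz; have [H1 H2 H3] := last_requestP Hs.
by rewrite /inI H1 H2 Hz -{1}H2.
Qed.

End Requests.

Section Runs.
Variables (k T : nat) (sigma : nat -> nat) (D : nat -> {fset nat}).
Hypothesis HD : valid_run k T sigma D.

Lemma valid_stepP p c c' : valid_step k p c c' ->
  [\/ p \in c /\ c' = c,
      [/\ p \notin c, #|` c| < k & c' = p |` c] |
      exists q, [/\ p \notin c, k <= #|` c|, q \in c & c' = p |` (c `\ q)]].
Proof.
rewrite /valid_step; case: ifP => Hp; first by move=> ->; apply: Or31.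
case: ifP => Hk; first by move=> ->; apply: Or32; split=> //; exact: negbT.
by case=> q Hq ->; apply: Or33; exists q; split=> //; rewrite leqNgt Hk.
Qed.

Lemma run_step t : t < T -> valid_step k (sigma t.+1) (D t) (D t.+1).
Proof. by move=> tT; case: HD => _; apply; lia. Qed.

Lemma run_requested_cached t : t < T -> sigma t.+1 \in D t.+1.
Proof.
move=> tT; case: (valid_stepP (run_step tT)) => [[_ ->]|[_ _ ->]|[q [_ _ _ ->]]] //;
by rewrite in_fset1U eqxx.
Qed.

Lemma cached_requested t z : t <= T -> z \in D t -> requested sigma t z.
Proof.
elim: t => [|t IH] tT; first by case: HD => -> _; rewrite inE.
rewrite requestedS; have {}IH := IH (ltnW tT).
case: (valid_stepP (run_step tT)) => [[_ ->]|[_ _ ->]|[q [_ _ _ ->]]].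
- by move=> /IH ->.
- by rewrite in_fset1U => /orP[/eqP->|/IH ->]; rewrite ?eqxx ?orbT.
- by rewrite in_fset1U in_fsetD1 => /orP[/eqP->|/andP[_ /IH ->]]; rewrite ?eqxx ?orbT.
Qed.

(* Before the cache first fills up, nothing has been evicted. *)
Lemma requested_cached t z : t <= T -> #|` D t| < k -> requested sigma t z -> z \in D t.
Proof.
elim: t => [|t IH] tT //; rewrite requestedS; have {}IH := IH (ltnW tT).
case: (valid_stepP (run_step tT)) => [[Hp ->]|[Hp Hk ->]|[q [Hp Hk Hq ->]]].
- by move=> Hk /orP[/(IH Hk)|/eqP<-].
- rewrite cardfsU1 Hp in_fset1U => Hk' /orP[Hs|/eqP->]; rewrite ?eqxx //.
  by rewrite IH ?orbT //; lia.
- rewrite cardfsU1 in_fsetD1 (negbTE Hp) andbF /= => Hk' _; exfalso.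
  move: Hk Hk'; have := cardfsD1 q (D t); rewrite Hq /=.
  by set a := #|` D t|; set b := #|` D t `\ q|; lia.
Qed.

Lemma run_enter a b z : z \notin D a -> z \in D b -> a <= b -> b <= T ->
  exists s, [/\ a < s, s <= b & sigma s = z].
Proof.
elim: b => [|b IH] Ha Hb ab bT.
  have a0 : a = 0 by lia.
  by move: Ha; rewrite a0 Hb.
case: (eqVneq a b.+1) => [E|ne]; first by move: Ha; rewrite E Hb.
case Hzb: (z \in D b).
  by have [||s [? ? ?]] := IH Ha Hzb; [lia|lia|exists s; split=> //; lia].
exists b.+1; split=> //; first lia.
move: Hb; case: (valid_stepP (run_step bT)) => [[_ ->]|[_ _ ->]|[q [_ _ _ ->]]].
- by rewrite Hzb.
- by rewrite in_fset1U Hzb orbF => /eqP.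
- by rewrite in_fset1U in_fsetD1 Hzb andbF orbF => /eqP.
Qed.

Lemma missesS t : misses t.+1 sigma D = misses t sigma D + (sigma t.+1 \notin D t).
Proof. by rewrite /misses -[t.+1]addn1 iotaD count_cat /= addn0 add1n addn1. Qed.

Lemma evicted_at_uniq j u1 u2 :
  evicted_at T sigma D j u1 -> evicted_at T sigma D j u2 -> u1 = u2.
Proof.
wlog le: u1 u2 / u1 <= u2.
  by move=> W H1 H2; case: (leqP u1 u2) => h; [exact: W | symmetry; apply: W => //; lia].
move=> /and4P[_ _ d1 /and3P[/andP[_ j1] _ _]].
move=> /and4P[/andP[_ b2] c2 _ /and3P[/andP[_ j2] _ /allP A]].
case: (eqVneq u1 u2) => // ne; exfalso.
have [||s [s1 s2 s3]] := run_enter d1 c2; [lia|lia|].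
have : s \in iota j.+1 (u2.-1 - j) by rewrite mem_iota; lia.
by move=> /A; rewrite s3 eqxx.
Qed.

Lemma no_overlap_sequential j j' u u' :
  evicted_at T sigma D j u -> evicted_at T sigma D j' u' -> u < u' -> nu T sigma j <= u' ->
  no_overlap T sigma D j j' /\ no_overlap T sigma D j' j.
Proof.
move=> Hu Hu' uu' Hnu; split=> v v' Hv Hv'.
  by rewrite (evicted_at_uniq Hv Hu) (evicted_at_uniq Hv' Hu'); split=> //; lia.
by rewrite (evicted_at_uniq Hv Hu') (evicted_at_uniq Hv' Hu); split=> //; lia.
Qed.

Lemma cached_last_request t x : t <= T -> x \in D t ->
  inI sigma D t (last_request sigma t x) /\
  nu T sigma (last_request sigma t x) = next_request T sigma t x.
Proof.
move=> tT Hx; have Hs := cached_requested tT Hx.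
by split; [apply: inI_last_request | apply: nu_last_request].
Qed.

Lemma evicted_at_last_request t q : t < T -> q \in D t ->
  sigma t.+1 \notin D t -> D t.+1 = sigma t.+1 |` (D t `\ q) ->
  evicted_at T sigma D (last_request sigma t q) t.+1.
Proof.
move=> tT Hq Hp Ht; have Hs := cached_requested (ltnW tT) Hq.
have qp : q != sigma t.+1 by apply: contraNneq Hp => <-.
rewrite /evicted_at; have [_ -> _] := last_requestP Hs.
by rewrite Hq Ht in_fset1U in_fsetD1 eqxx (negbTE qp) inI_last_request //; lia.
Qed.

End Runs.

Lemma notfull_run_sub k T sigma (D D' : nat -> {fset nat}) t :
  valid_run k T sigma D -> valid_run k T sigma D' -> t <= T ->
  #|` D t| < k -> D' t `<=` D t.
Proof.
move=> HD HD' tT Hk; apply/fsubsetP => z /(cached_requested HD' tT).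
exact: (requested_cached HD tT Hk).
Qed.

Definition upd (A : eqType) (B : Type) (f : A -> B) (a : A) (b : B) :=
  fun x => if x == a then b else f x.

Lemma updE (A : eqType) (B : Type) (f : A -> B) a b x :
  upd f a b x = if x == a then b else f x.
Proof. by []. Qed.

Lemma uniq_map_inj (A B : eqType) (f : A -> B) s :
  uniq (map f s) -> {in s &, injective f}.
Proof.
elim: s => // a s IH /= /andP[fa U] x y; rewrite !inE.
case/orP=> [/eqP->|xs] /orP[/eqP->|ys] // E.
- by case/negP: fa; rewrite E map_f.
- by case/negP: fa; rewrite -E map_f.
- exact: IH.
Qed.

Lemma mem_map_perm_cat (A B : eqType) (f : A -> B) s s1 s2 z :
  perm_eq s (s1 ++ s2) -> uniq (map f s) ->
  (z \in map f s2) = (z \in map f s) && (z \notin map f s1).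
Proof.
move=> P U; have P' := perm_map f P; rewrite (perm_mem P') map_cat mem_cat.
have := U; rewrite (perm_uniq P') map_cat cat_uniq => /and3P[_ /hasPn H _].
case Hz: (z \in map f s2); last by rewrite orbF andbN.
by rewrite orbT (negbTE (H _ Hz)).
Qed.

Lemma uniq_map_perm_cat (A B : eqType) (f : A -> B) s s1 s2 s1' :
  perm_eq s (s1 ++ s2) -> uniq (map f s) -> uniq (map f s1') ->
  (forall z, z \in map f s1' -> z \notin map f s2) -> uniq (map f (s1' ++ s2)).
Proof.
move=> P U U' H; rewrite map_cat cat_uniq U' /=.
have := U; rewrite (perm_uniq (perm_map f P)) map_cat cat_uniq => /and3P[_ _ ->].
by rewrite andbT; apply/hasPn => z Hz; apply/negP => /H; rewrite Hz.
Qed.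

Lemma perm_to_rem2 (A : eqType) (s : seq A) a b : a \in s -> b \in rem a s ->
  perm_eq s ([:: a; b] ++ rem b (rem a s)).
Proof.
move=> Ha Hb; apply: (perm_trans (perm_to_rem Ha)) => /=.
by rewrite perm_cons; apply: perm_to_rem.
Qed.

Section Coupling.
Variables (k T : nat) (sigma : nat -> nat) (C O : nat -> {fset nat}).
Hypotheses (HC : valid_run k T sigma C) (HO : valid_run k T sigma O).

Definition bad t (xy : nat * nat) := next_request T sigma t xy.2 < next_request T sigma t xy.1.

Definition opt_miss s := sigma s \notin O s.-1.

Record matching t (M : seq (nat * nat)) : Prop := {
  matching_uniq_fst : uniq (map fst M);
  matching_uniq_snd : uniq (map snd M);
  mem_matching_fst : forall z, (z \in map fst M) = (z \in C t) && (z \notin O t);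
  mem_matching_snd : forall z, (z \in map snd M) = (z \in O t) && (z \notin C t) }.

(* The conclusion of the theorem at time [t], colors being miss times of [O]. *)
Record colored_graph t (E : seq (nat * nat)) (col : nat * nat -> nat) : Prop := {
  graph_uniq : uniq E;
  graph_edge : forall e, e \in E -> exists u, [/\ u <= t, evicted_at T sigma C e.2 u,
    inI sigma C u.-1 e.1 & nu T sigma e.2 < nu T sigma e.1];
  graph_target_inj : forall e e', e \in E -> e' \in E -> e.2 = e'.2 -> e = e';
  graph_color_miss : forall e, e \in E -> 0 < col e <= t /\ opt_miss (col e);
  graph_color_source : forall e e', e \in E -> e' \in E -> col e = col e' -> e.1 = e'.1;
  graph_color_no_overlap : forall e e', e \in E -> e' \in E -> e <> e' -> col e = col e' ->
    no_overlap T sigma C e.2 e'.2 }.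

(* [cc x] is the color reserved for the next edge leaving the last request of
   [x]; every edge already carrying that color has its target re-requested by
   time [t], or by the time the partner [y] of [x] is, if [(x, y)] is bad. *)
Record color_chains t (M E : seq (nat * nat)) (col : nat * nat -> nat) (cc : nat -> nat) : Prop := {
  chain_color_miss : forall x, x \in map fst M -> 0 < cc x <= t /\ opt_miss (cc x);
  chain_color_inj : forall x x', x \in map fst M -> x' \in map fst M -> cc x = cc x' -> x = x';
  chain_color_source : forall x e, x \in map fst M -> e \in E -> col e = cc x ->
    e.1 = last_request sigma t x;
  chain_closed : forall x y e, (x, y) \in M -> e \in E -> col e = cc x ->
    nu T sigma e.2 <= t \/ (bad t (x, y) /\ nu T sigma e.2 <= next_request T sigma t y) }.

Definition coupling_inv t M E col cc :=
  [/\ matching t M, colored_graph t E col, color_chains t M E col cc &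
      misses t sigma C + count (bad t) M <= misses t sigma O + size E].

Definition coupled t := exists M E col cc, coupling_inv t M E col cc.

Lemma mem_matching_pair t M x y : matching t M -> (x, y) \in M ->
  [/\ x \in C t, x \notin O t, y \in O t & y \notin C t].
Proof.
move=> [_ _ H1 H2] Hxy.
have := H1 x; rewrite (map_f fst Hxy) => /esym/andP[-> ->].
by have := H2 y; rewrite (map_f snd Hxy) => /esym/andP[-> ->].
Qed.

Lemma matching_fst_inj t M x y y' : matching t M -> (x, y) \in M -> (x, y') \in M -> y = y'.
Proof. by move=> HM H H'; case: (uniq_map_inj (matching_uniq_fst HM) H H' erefl). Qed.

Lemma matching_snd_inj t M x x' y : matching t M -> (x, y) \in M -> (x', y) \in M -> x = x'.
Proof. by move=> HM H H'; case: (uniq_map_inj (matching_uniq_snd HM) H H' erefl). Qed.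

Lemma matching_pair_neq_request t M x y : t < T -> matching t.+1 M -> (x, y) \in M ->
  sigma t.+1 != x /\ sigma t.+1 != y.
Proof.
move=> tT HM /(mem_matching_pair HM) [_ Hx _ Hy]; split.
  by apply: contraNneq Hx => <-; rewrite (run_requested_cached HO tT).
by apply: contraNneq Hy => <-; rewrite (run_requested_cached HC tT).
Qed.

Lemma request_notin_matching_fst t M : t < T -> matching t.+1 M ->
  (sigma t.+1 \in map fst M) = false.
Proof. by move=> tT HM; rewrite (mem_matching_fst HM) (run_requested_cached HO tT) andbF. Qed.

Lemma notbadE t x y :
  ~~ bad t (x, y) = (next_request T sigma t x <= next_request T sigma t y).
Proof. by rewrite /bad -leqNgt. Qed.

Lemma badS t M xy : t < T -> matching t.+1 M -> xy \in M -> bad t.+1 xy = bad t xy.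
Proof.
move=> tT HM; case: xy => x y /(matching_pair_neq_request tT HM) [px py].
by rewrite /bad /= -!next_requestS.
Qed.

Lemma count_badS t M : t < T -> matching t.+1 M -> count (bad t.+1) M = count (bad t) M.
Proof. by move=> tT HM; apply: eq_in_count => xy; apply: badS. Qed.

Lemma colored_graphS t E col : colored_graph t E col -> colored_graph t.+1 E col.
Proof.
case=> U Ed Tg Co Sr Ov; split=> //.
- by move=> e /Ed [u [h1 h2 h3 h4]]; exists u; split=> //; lia.
- by move=> e /Co [h1 h2]; split=> //; lia.
Qed.

Lemma colored_graph_add t E col en cn : t < T -> colored_graph t E col ->
  evicted_at T sigma C en.2 t.+1 -> inI sigma C t en.1 -> nu T sigma en.2 < nu T sigma en.1 ->
  0 < cn <= t.+1 -> opt_miss cn ->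
  (forall e, e \in E -> col e = cn -> e.1 = en.1 /\ nu T sigma e.2 <= t.+1) ->
  en \notin E /\ colored_graph t.+1 (en :: E) (upd col en cn).
Proof.
move=> tT [U Ed Tg Co Sr Ov] Hev HI Hnu Hc1 Hc2 Hcol.
have new_target e : e \in E -> e.2 <> en.2.
  move=> He E2; have [u [u1 u2 _ _]] := Ed e He.
  by move: u2; rewrite E2 => /(evicted_at_uniq HC Hev); lia.
have nE : en \notin E by apply/negP => /new_target; case.
have updo e : e \in E -> upd col en cn e = col e.
  by move=> He; rewrite updE; case: eqP => // Ee; move: He; rewrite Ee (negbTE nE).
have ovl e : e \in E -> col e = cn ->
    no_overlap T sigma C e.2 en.2 /\ no_overlap T sigma C en.2 e.2.
  move=> He Hce; have [u [u1 u2 _ _]] := Ed e He; have [_ Hn] := Hcol e He Hce.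
  have ut : u < t.+1 by lia.
  by have := no_overlap_sequential HC u2 Hev ut Hn.
split=> //; split.
- by rewrite /= nE.
- move=> e; rewrite inE => /orP[/eqP->|/Ed [u [? ? ? ?]]]; first by exists t.+1.
  by exists u; split=> //; lia.
- move=> e e'; rewrite !inE => /orP[/eqP->|He] /orP[/eqP->|He'] // E2.
  + by case: (new_target _ He' (esym E2)).
  + by case: (new_target _ He E2).
  + exact: Tg.
- move=> e; rewrite inE => /orP[/eqP->|He]; first by rewrite updE eqxx.
  by rewrite updo //; have [? ?] := Co e He; split=> //; lia.
- move=> e e'; rewrite !inE => /orP[/eqP->|He] /orP[/eqP->|He'] //.
  + by rewrite [upd _ _ _ en]updE eqxx updo // => Ee; have [-> _] := Hcol e' He' (esym Ee).
  + by rewrite [upd _ _ _ en]updE eqxx updo // => Ee; have [-> _] := Hcol e He Ee.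
  + by rewrite !updo //; apply: Sr.
- move=> e e'; rewrite !inE => /orP[/eqP->|He] /orP[/eqP->|He'] //.
  + by rewrite [upd _ _ _ en]updE eqxx updo // => _ Ee; have [] := ovl e' He' (esym Ee).
  + by rewrite [upd _ _ _ en]updE eqxx updo // => _ Ee; have [] := ovl e He Ee.
  + by rewrite !updo //; apply: Ov.
Qed.

(* [xf] is the page whose color is refreshed to [t.+1]; every other pair of
   [M'] must keep the chain invariant of its first page. *)
Definition chains_inherited t (M M' E : seq (nat * nat)) (col : nat * nat -> nat)
    (cc : nat -> nat) xf :=
  forall x y, (x, y) \in M' -> x != xf -> x \in map fst M /\
    ((x, y) \in M \/ forall e, e \in E -> col e = cc x -> nu T sigma e.2 <= t.+1).

Lemma chains_inherited_sub t M M' E col cc xf :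
  {subset M' <= M} -> chains_inherited t M M' E col cc xf.
Proof. by move=> sub x y /sub Hxy _; split; [exact: (map_f fst Hxy) | left]. Qed.

Lemma chains_inherited_cons t M L E col cc xf y :
  {subset L <= M} -> chains_inherited t M ((xf, y) :: L) E col cc xf.
Proof.
move=> sub x y'; rewrite inE => /orP[/eqP[-> _]|Hxy]; first by rewrite eqxx.
by move=> _; split; [exact: (map_f fst (sub _ Hxy)) | left; exact: sub].
Qed.

Lemma color_chainsS t M M' E col cc xf :
  t < T -> matching t M -> matching t.+1 M' -> color_chains t M E col cc ->
  colored_graph t E col -> (xf \in map fst M' -> opt_miss t.+1) ->
  chains_inherited t M M' E col cc xf ->
  color_chains t.+1 M' E col (upd cc xf t.+1).
Proof.
move=> tT HM HM' [Ccc Cinj Csrc Cch] HE Hfr Hold.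
have inherited x : x \in map fst M' -> x != xf -> x \in map fst M.
  by case/mapP=> [[a y] Hxy /= ->] /(Hold _ _ Hxy) [].
split.
- move=> x Hx; rewrite updE; case: (eqVneq x xf) => [Ex|ne].
    by subst xf; split; [lia | exact: Hfr].
  by have [? ?] := Ccc x (inherited x Hx ne); split=> //; lia.
- move=> x x' Hx Hx'; rewrite !updE.
  case: (eqVneq x xf) => [->|ne]; case: (eqVneq x' xf) => [->|ne'] //.
  + by have [? ?] := Ccc x' (inherited x' Hx' ne'); lia.
  + by have [? ?] := Ccc x (inherited x Hx ne); lia.
  + exact: Cinj (inherited x Hx ne) (inherited x' Hx' ne').
- move=> x e Hx He; rewrite updE; case: (eqVneq x xf) => [_|ne].
    by have [? ?] := graph_color_miss HE He; lia.
  have [y Hy] : exists y, (x, y) \in M' by case/mapP: Hx => [[a y] Hy /= ->]; exists y.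
  have [px _] := matching_pair_neq_request tT HM' Hy.
  by move=> Hc; rewrite (Csrc _ e (inherited _ Hx ne) He Hc) last_requestS.
- move=> x y e Hxy He; rewrite updE; case: (eqVneq x xf) => [_|ne].
    by have [? ?] := graph_color_miss HE He; lia.
  have [_ [Hin|Hclosed]] := Hold x y Hxy ne => Hc; last by left; apply: Hclosed.
  have [px py] := matching_pair_neq_request tT HM' Hxy.
  case: (Cch x y e Hin He Hc) => [|[? ?]]; first by left; lia.
  by right; rewrite (badS tT HM' Hxy) -next_requestS.
Qed.

Lemma color_chains_add t M' E col cc xs ys en :
  t < T -> matching t.+1 M' -> color_chains t.+1 M' E col cc ->
  en \notin E -> (xs, ys) \in M' -> bad t.+1 (xs, ys) ->
  nu T sigma en.2 <= next_request T sigma t.+1 ys -> en.1 = last_request sigma t.+1 xs ->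
  color_chains t.+1 M' (en :: E) (upd col en (cc xs)) cc.
Proof.
move=> tT HM' [Ccc Cinj Csrc Cch] nE Hs Hb Hn Hl.
have updo e : e \in E -> upd col en (cc xs) e = col e.
  by move=> He; rewrite updE; case: eqP => // Ee; move: He; rewrite Ee (negbTE nE).
have Hxs : xs \in map fst M' by apply: (map_f fst Hs).
split=> //.
- move=> x e Hx; rewrite inE => /orP[/eqP->|He].
    by rewrite updE eqxx => /(Cinj _ _ Hxs Hx) <-.
  by rewrite updo //; apply: Csrc.
- move=> x y e Hxy; rewrite inE => /orP[/eqP->|He].
    rewrite updE eqxx => /(Cinj _ _ Hxs (map_f fst Hxy)) /= Ex; subst x.
    by right; rewrite -(matching_fst_inj HM' Hs Hxy).
  by rewrite updo //; apply: Cch.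
Qed.

(* The flag [b] tells whether the edge [en], leaving the last request of [xs],
   is added; it pays for a unit of potential. *)
Lemma coupledS t M E col cc M' xf (b : bool) en xs ys :
  t < T -> coupling_inv t M E col cc -> matching t.+1 M' ->
  (xf \in map fst M' -> opt_miss t.+1) -> chains_inherited t M M' E col cc xf ->
  misses t.+1 sigma C + count (bad t) M' <= misses t.+1 sigma O + size E + b ->
  (b -> [/\ evicted_at T sigma C en.2 t.+1, inI sigma C t en.1, (xs, ys) \in M',
           bad t (xs, ys) & [/\ nu T sigma en.2 <= next_request T sigma t ys,
           nu T sigma en.2 < nu T sigma en.1 & en.1 = last_request sigma t xs]]) ->
  (b -> xs != xf -> forall e, e \in E -> col e = cc xs -> nu T sigma e.2 <= t.+1) ->
  coupled t.+1.
Proof.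
move=> tT [HM HE HCI Hcost] HM' Hfr Hold Hc Hedge Hclosed.
have HCI' := color_chainsS tT HM HM' HCI HE Hfr Hold.
case: b Hc Hedge Hclosed => Hc Hedge Hclosed; last first.
  exists M', E, col, (upd cc xf t.+1); split=> //; first exact: colored_graphS.
  by rewrite (count_badS tT HM'); lia.
have [Hev HI1 Hs Hb [Hn Hnu Hl]] := Hedge isT.
have [pxs pys] := matching_pair_neq_request tT HM' Hs.
have [Hc1 Hc2] := chain_color_miss HCI' (map_f fst Hs).
have Hcol e : e \in E -> col e = upd cc xf t.+1 xs -> e.1 = en.1 /\ nu T sigma e.2 <= t.+1.
  move=> He; rewrite updE; case: (eqVneq xs xf) => [_|ne] Hce.
    by have [? _] := graph_color_miss HE He; lia.
  have [Hx0 _] := Hold xs ys Hs ne.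
  by split; [rewrite Hl; apply: (chain_color_source HCI) | apply: Hclosed].
have [nE HE'] := colored_graph_add tT HE Hev HI1 Hnu Hc1 Hc2 Hcol.
exists M', (en :: E), (upd col en (upd cc xf t.+1 xs)), (upd cc xf t.+1); split=> //.
- apply: (color_chains_add tT HM' HCI' nE Hs).
  + by rewrite (badS tT HM' Hs).
  + by rewrite -next_requestS.
  + by rewrite last_requestS.
- by rewrite (count_badS tT HM') /=; lia.
Qed.

Lemma coupledS_no_edge t M E col cc M' xf :
  t < T -> coupling_inv t M E col cc -> matching t.+1 M' ->
  (xf \in map fst M' -> opt_miss t.+1) -> chains_inherited t M M' E col cc xf ->
  misses t.+1 sigma C + count (bad t) M' <= misses t.+1 sigma O + size E ->
  coupled t.+1.
Proof.
move=> tT HI HM' Hfr Hold Hc.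
apply: (coupledS (b := false) (en := (0, 0)) (xs := 0) (ys := 0) tT HI HM' Hfr Hold) => //.
by rewrite addn0.
Qed.

Lemma coupledS_evict t M E col cc M' xf q (b : bool) xs ys :
  t < T -> coupling_inv t M E col cc -> matching t.+1 M' ->
  q \in C t -> sigma t.+1 \notin C t -> C t.+1 = sigma t.+1 |` (C t `\ q) ->
  (xf \in map fst M' -> opt_miss t.+1) -> chains_inherited t M M' E col cc xf ->
  misses t.+1 sigma C + count (bad t) M' <= misses t.+1 sigma O + size E + b ->
  (b -> [/\ (xs, ys) \in M', bad t (xs, ys) &
            next_request T sigma t q <= next_request T sigma t ys]) ->
  (b -> xs != xf -> forall e, e \in E -> col e = cc xs -> nu T sigma e.2 <= t.+1) ->
  coupled t.+1.
Proof.
move=> tT HI HM' Hq Hpc EC Hfr Hold Hc Hedge.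
apply: (coupledS (en := (last_request sigma t xs, last_request sigma t q)) (ys := ys)
          tT HI HM' Hfr Hold Hc).
move=> /Hedge [Hs Hb Hn].
have [pxs _] := matching_pair_neq_request tT HM' Hs.
have [+ _ _ _] := mem_matching_pair HM' Hs.
rewrite EC in_fset1U in_fsetD1 eq_sym (negbTE pxs) => /andP[_ Hxs].
have [HIxs nuxs] := cached_last_request HC (ltnW tT) Hxs.
have [_ nuq] := cached_last_request HC (ltnW tT) Hq.
split=> //=; first by have := evicted_at_last_request HC tT Hq Hpc EC.
by rewrite nuq nuxs; split=> //; apply: leq_ltn_trans Hb.
Qed.

Lemma matching_update t M removed kept added : matching t M -> perm_eq M (removed ++ kept) ->
  uniq (map fst added) -> uniq (map snd added) ->
  (forall z, z \in map fst added -> ~~ [&& z \in C t, z \notin O t & z \notin map fst removed]) ->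
  (forall z, z \in map snd added -> ~~ [&& z \in O t, z \notin C t & z \notin map snd removed]) ->
  (forall z, (z \in map fst added) || [&& z \in C t, z \notin O t & z \notin map fst removed] =
             (z \in C t.+1) && (z \notin O t.+1)) ->
  (forall z, (z \in map snd added) || [&& z \in O t, z \notin C t & z \notin map snd removed] =
             (z \in O t.+1) && (z \notin C t.+1)) ->
  matching t.+1 (added ++ kept).
Proof.
move=> [U1 U2 H1 H2] P N1 N2 F1 F2 G1 G2.
have mem_fst z : (z \in map fst kept) = [&& z \in C t, z \notin O t & z \notin map fst removed].
  by rewrite (mem_map_perm_cat z P U1) H1 andbA.
have mem_snd z : (z \in map snd kept) = [&& z \in O t, z \notin C t & z \notin map snd removed].
  by rewrite (mem_map_perm_cat z P U2) H2 andbA.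
split.
- by apply: (uniq_map_perm_cat P) => // z /F1; rewrite mem_fst.
- by apply: (uniq_map_perm_cat P) => // z /F2; rewrite mem_snd.
- by move=> z; rewrite map_cat mem_cat mem_fst.
- by move=> z; rewrite map_cat mem_cat mem_snd.
Qed.

Ltac solve_mem :=
  repeat (first
  [ match goal with
    | H1 : is_true (?a \in ?S), H2 : is_true (?a \notin ?S) |- _ => by rewrite H1 in H2
    | H : is_true (?a != ?a) |- _ => by rewrite eqxx in H
    | H : is_true (?a \in ?S) |- context [?a \in ?S] => rewrite H
    | H : is_true (?a \notin ?S) |- context [?a \in ?S] => rewrite (negbTE H)
    | H : is_true (?a != ?b) |- context [?a == ?b] => rewrite (negbTE H)
    | H : is_true (?a != ?b) |- context [?b == ?a] => rewrite eq_sym (negbTE H)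
    | |- context [?a == ?a] => rewrite eqxx
    | |- context [?a == ?b] => case: (eqVneq a b) => [?|?]; [subst|]
    end
  | progress rewrite /= ?andbT ?andbF ?orbF ?orbT ]); try by [];
  repeat match goal with |- context [?a \in ?S] => case: (a \in S) end.

(* Only the membership facts about the two caches matter here; dropping the
   rest of the context keeps [solve_mem] fast. *)
Ltac update_matching HM P EC EO C O :=
  apply: (matching_update HM P) => // z; rewrite ?EC ?EO /= ?inE;
  repeat match goal with
  | H : ?A |- _ => lazymatch A with
                   | context [C] => fail | context [O] => fail
                   | is_true (_ != _) => fail | _ => clear H end
  end;
  try (move=> /eqP ->); solve_mem.

Ltac potential_lia Hc :=
  rewrite /=; try (set L := count _ (rem _ _) in Hc * ); clear -Hc; lia.

Section Step.
Variables (t : nat) (M E : seq (nat * nat)) (col : nat * nat -> nat) (cc : nat -> nat).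
Hypotheses (tT : t < T) (HI : coupling_inv t M E col cc).
Local Notation p := (sigma t.+1).

Lemma coupledS_same : (p \in C t) = (p \in O t) ->
  (forall z, (z \in C t.+1) && (z \notin O t.+1) = (z \in C t) && (z \notin O t)) ->
  (forall z, (z \in O t.+1) && (z \notin C t.+1) = (z \in O t) && (z \notin C t)) ->
  coupled t.+1.
Proof.
move=> Hp EC EO; have [HM _ _ Hcost] := HI.
have HM' : matching t.+1 M by case: HM => U1 U2 H1 H2; split=> // z; rewrite ?EC ?EO.
apply: (coupledS_no_edge (xf := p) tT HI HM').
- by rewrite request_notin_matching_fst.
- exact: chains_inherited_sub.
- by rewrite !missesS Hp; lia.
Qed.

Lemma coupledS_hit_evict r : p \in C t -> C t.+1 = C t ->
  p \notin O t -> r \in O t -> O t.+1 = p |` (O t `\ r) -> coupled t.+1.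
Proof.
move=> Hpc EC Hpo Hr EO; have [HM HE HCI Hcost] := HI.
have mC : misses t.+1 sigma C = misses t sigma C by rewrite missesS Hpc addn0.
have mO : misses t.+1 sigma O = (misses t sigma O).+1 by rewrite missesS Hpo addn1.
have : p \in map fst M by rewrite (mem_matching_fst HM) Hpc Hpo.
case/mapP=> [[p' y0] Hpy0 /= Ep]; subst p'.
have [_ _ Hy0o Hy0c] := mem_matching_pair HM Hpy0.
have P : perm_eq M ([:: (p, y0)] ++ rem (p, y0) M) := perm_to_rem Hpy0.
have Hc := Hcost; rewrite (permP P (bad t)) /= in Hc.
case: (eqVneq r y0) => [Ery0|ry0]; last case: (boolP (r \in C t)) => Hrc.
- subst r; have HM' : matching t.+1 ([::] ++ rem (p, y0) M) by update_matching HM P EC EO C O.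
  apply: (coupledS_no_edge (xf := p) tT HI HM') => //.
    by apply: chains_inherited_sub => z /mem_rem.
  by rewrite mC mO; potential_lia Hc.
- have HM' : matching t.+1 ([:: (r, y0)] ++ rem (p, y0) M) by update_matching HM P EC EO C O.
  apply: (coupledS_no_edge (xf := r) tT HI HM') => //.
    by apply: chains_inherited_cons => z /mem_rem.
  by rewrite mC mO; potential_lia Hc.
- have : r \in map snd M by rewrite (mem_matching_snd HM) Hr Hrc.
  case/mapP=> [[xr r'] Hxr /= Er]; subst r'.
  have [Hxrc Hxro _ _] := mem_matching_pair HM Hxr.
  have nxr : xr != p.
    by apply: contra_neq ry0 => Exr; apply: (matching_fst_inj HM Hxr); rewrite Exr.
  have Hxr' : (xr, r) \in rem (p, y0) M.
    rewrite (mem_rem_uniq _ (map_uniq (matching_uniq_fst HM))) inE Hxr andbT.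
    by apply: contra_neq nxr => [[]].
  have {}P := perm_to_rem2 Hpy0 Hxr'.
  have {}Hc := Hcost; rewrite (permP P (bad t)) /= in Hc.
  have HM' : matching t.+1 ([:: (xr, y0)] ++ rem (xr, r) (rem (p, y0) M)).
    by update_matching HM P EC EO C O.
  apply: (coupledS_no_edge (xf := xr) tT HI HM') => //.
    by apply: chains_inherited_cons => z /mem_rem/mem_rem.
  by rewrite mC mO; potential_lia Hc.
Qed.

Lemma coupledS_evict_hit q : p \notin C t -> q \in C t -> C t.+1 = p |` (C t `\ q) ->
  p \in O t -> O t.+1 = O t -> coupled t.+1.
Proof.
move=> Hpc Hq EC Hpo EO; have [HM HE HCI Hcost] := HI.
have mC : misses t.+1 sigma C = (misses t sigma C).+1 by rewrite missesS Hpc addn1.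
have mO : misses t.+1 sigma O = misses t sigma O by rewrite missesS Hpo addn0.
have : p \in map snd M by rewrite (mem_matching_snd HM) Hpc Hpo.
case/mapP=> [[x0 p'] Hx0p /= Ep]; subst p'.
have [Hx0c Hx0o _ _] := mem_matching_pair HM Hx0p.
have x0p : p != x0 by apply: contraNneq Hpc => ->.
have bad_x0p : bad t (x0, p) by rewrite /bad /= next_request_now // next_request_later.
have closed_x0 e : e \in E -> col e = cc x0 -> nu T sigma e.2 <= t.+1.
  move=> He Hce; case: (chain_closed HCI Hx0p He Hce) => [|[_]]; first lia.
  by rewrite next_request_now.
have P : perm_eq M ([:: (x0, p)] ++ rem (x0, p) M) := perm_to_rem Hx0p.
have Hc := Hcost; rewrite (permP P (bad t)) /= bad_x0p in Hc.
case: (eqVneq q x0) => [Eqx0|qx0]; last case: (boolP (q \in O t)) => Hqo.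
- subst q; have HM' : matching t.+1 ([::] ++ rem (x0, p) M) by update_matching HM P EC EO C O.
  apply: (coupledS_no_edge (xf := p) tT HI HM'); first by rewrite request_notin_matching_fst.
    by apply: chains_inherited_sub => z /mem_rem.
  by rewrite mC mO; potential_lia Hc.
- have HM' : matching t.+1 ([:: (x0, q)] ++ rem (x0, p) M) by update_matching HM P EC EO C O.
  apply: (coupledS_evict (xf := p) (b := bad t (x0, q)) (xs := x0) (ys := q) tT HI HM' Hq Hpc EC).
  + by rewrite request_notin_matching_fst.
  + move=> x y; rewrite inE => /orP[/eqP[-> _]|/mem_rem Hxy] _.
      by split; [exact: (map_f fst Hx0p) | right].
    by split; [exact: (map_f fst Hxy) | left].
  + by rewrite mC mO; potential_lia Hc.
  + by move=> Hb; rewrite mem_head.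
  + by move=> _ _; apply: closed_x0.
- have : q \in map fst M by rewrite (mem_matching_fst HM) Hq Hqo.
  case/mapP=> [[q' yq] Hqy /= Eq']; subst q'.
  have [_ _ Hyqo Hyqc] := mem_matching_pair HM Hqy.
  have yqp : yq != p.
    by apply: contra_neq qx0 => Eyq; apply: (matching_snd_inj HM Hqy); rewrite Eyq.
  have Hqy' : (q, yq) \in rem (x0, p) M.
    rewrite (mem_rem_uniq _ (map_uniq (matching_uniq_fst HM))) inE Hqy andbT.
    by apply: contra_neq qx0 => [[]].
  have {}P := perm_to_rem2 Hx0p Hqy'.
  have {}Hc := Hcost; rewrite (permP P (bad t)) /= bad_x0p in Hc.
  have HM' : matching t.+1 ([:: (x0, yq)] ++ rem (q, yq) (rem (x0, p) M)).
    by update_matching HM P EC EO C O.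
  apply: (coupledS_evict (xf := p) (b := bad t (x0, yq) && ~~ bad t (q, yq))
            (xs := x0) (ys := yq) tT HI HM' Hq Hpc EC).
  + by rewrite request_notin_matching_fst.
  + move=> x y; rewrite inE => /orP[/eqP[-> _]|/mem_rem/mem_rem Hxy] _.
      by split; [exact: (map_f fst Hx0p) | right].
    by split; [exact: (map_f fst Hxy) | left].
  + by rewrite mC mO; potential_lia Hc.
  + by case/andP=> Hb1; rewrite notbadE mem_head => Hb2.
  + by move=> _ _; apply: closed_x0.
Qed.

Lemma coupledS_evict_evict_shared q r : p \notin C t -> q \in C t -> C t.+1 = p |` (C t `\ q) ->
  p \notin O t -> r \in O t -> O t.+1 = p |` (O t `\ r) -> q != r -> q \in O t ->
  coupled t.+1.
Proof.
move=> Hpc Hq EC Hpo Hr EO qr Hqo; have [HM HE HCI Hcost] := HI.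
have mC : misses t.+1 sigma C = (misses t sigma C).+1 by rewrite missesS Hpc addn1.
have mO : misses t.+1 sigma O = (misses t sigma O).+1 by rewrite missesS Hpo addn1.
case: (boolP (r \in C t)) => Hrc.
- have P : perm_eq M ([::] ++ M) by [].
  have HM' : matching t.+1 ([:: (r, q)] ++ M) by update_matching HM P EC EO C O.
  apply: (coupledS_evict (xf := r) (b := bad t (r, q)) (xs := r) (ys := q)
            tT HI HM' Hq Hpc EC) => //.
  + exact: chains_inherited_cons.
  + by rewrite mC mO; potential_lia Hcost.
  + by move=> Hb; rewrite mem_head.
  + by move=> _; rewrite eqxx.
- have : r \in map snd M by rewrite (mem_matching_snd HM) Hr Hrc.
  case/mapP=> [[xr r'] Hxr /= Er]; subst r'.
  have [Hxrc Hxro _ _] := mem_matching_pair HM Hxr.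
  have P : perm_eq M ([:: (xr, r)] ++ rem (xr, r) M) := perm_to_rem Hxr.
  have Hc := Hcost; rewrite (permP P (bad t)) /= in Hc.
  have HM' : matching t.+1 ([:: (xr, q)] ++ rem (xr, r) M) by update_matching HM P EC EO C O.
  apply: (coupledS_evict (xf := xr) (b := bad t (xr, q)) (xs := xr) (ys := q)
            tT HI HM' Hq Hpc EC) => //.
  + by apply: chains_inherited_cons => z /mem_rem.
  + by rewrite mC mO; potential_lia Hc.
  + by move=> Hb; rewrite mem_head.
  + by move=> _; rewrite eqxx.
Qed.

Lemma coupledS_evict_evict_matched q r : p \notin C t -> q \in C t -> C t.+1 = p |` (C t `\ q) ->
  p \notin O t -> r \in O t -> O t.+1 = p |` (O t `\ r) -> q != r -> q \notin O t ->
  coupled t.+1.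
Proof.
move=> Hpc Hq EC Hpo Hr EO qr Hqo; have [HM HE HCI Hcost] := HI.
have mC : misses t.+1 sigma C = (misses t sigma C).+1 by rewrite missesS Hpc addn1.
have mO : misses t.+1 sigma O = (misses t sigma O).+1 by rewrite missesS Hpo addn1.
have : q \in map fst M by rewrite (mem_matching_fst HM) Hq Hqo.
case/mapP=> [[q' yq] Hqy /= Eq']; subst q'.
have [_ _ Hyqo Hyqc] := mem_matching_pair HM Hqy.
have P : perm_eq M ([:: (q, yq)] ++ rem (q, yq) M) := perm_to_rem Hqy.
have Hc := Hcost; rewrite (permP P (bad t)) /= in Hc.
case: (boolP (r \in C t)) => Hrc.
- have HM' : matching t.+1 ([:: (r, yq)] ++ rem (q, yq) M) by update_matching HM P EC EO C O.
  apply: (coupledS_evict (xf := r) (b := bad t (r, yq) && ~~ bad t (q, yq))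
            (xs := r) (ys := yq) tT HI HM' Hq Hpc EC) => //.
  + by apply: chains_inherited_cons => z /mem_rem.
  + by rewrite mC mO; potential_lia Hc.
  + by case/andP=> Hb1; rewrite notbadE mem_head => Hb2.
  + by move=> _; rewrite eqxx.
- have : r \in map snd M by rewrite (mem_matching_snd HM) Hr Hrc.
  case/mapP=> [[xr r'] Hxr /= Er]; subst r'.
  have [Hxrc Hxro _ _] := mem_matching_pair HM Hxr.
  case: (eqVneq yq r) => [Eyq|yqr].
    subst yq; have Exq := matching_snd_inj HM Hxr Hqy; subst xr.
    have HM' : matching t.+1 ([::] ++ rem (q, r) M) by update_matching HM P EC EO C O.
    apply: (coupledS_no_edge (xf := p) tT HI HM'); first by rewrite request_notin_matching_fst.
      by apply: chains_inherited_sub => z /mem_rem.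
    by rewrite mC mO; potential_lia Hc.
  have xrq : xr != q.
    by apply: contra_neq yqr => Exr; apply: (matching_fst_inj HM Hqy); rewrite -Exr.
  have Hxr' : (xr, r) \in rem (q, yq) M.
    rewrite (mem_rem_uniq _ (map_uniq (matching_uniq_fst HM))) inE Hxr andbT.
    by apply: contra_neq xrq => [[]].
  have {}P := perm_to_rem2 Hqy Hxr'.
  have {}Hc := Hcost; rewrite (permP P (bad t)) /= in Hc.
  have HM' : matching t.+1 ([:: (xr, yq)] ++ rem (xr, r) (rem (q, yq) M)).
    by update_matching HM P EC EO C O.
  apply: (coupledS_evict (xf := xr) (b := bad t (xr, yq) && ~~ bad t (q, yq))
            (xs := xr) (ys := yq) tT HI HM' Hq Hpc EC) => //.
  + by apply: chains_inherited_cons => z /mem_rem/mem_rem.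
  + by rewrite mC mO; potential_lia Hc.
  + by case/andP=> Hb1; rewrite notbadE mem_head => Hb2.
  + by move=> _; rewrite eqxx.
Qed.

Lemma coupledS_step : coupled t.+1.
Proof.
case: (valid_stepP (run_step HC tT)) => [[Hpc EC]|[Hpc Hk EC]|[q [Hpc Hk Hq EC]]];
case: (valid_stepP (run_step HO tT)) => [[Hpo EO]|[Hpo Hko EO]|[r [Hpo Hko Hr EO]]].
- by apply: coupledS_same => [|z|z]; rewrite ?EC ?EO ?Hpc ?Hpo.
- by rewrite (fsubsetP (notfull_run_sub HO HC (ltnW tT) Hko) _ Hpc) in Hpo.
- exact: coupledS_hit_evict Hpc EC Hpo Hr EO.
- by rewrite (fsubsetP (notfull_run_sub HC HO (ltnW tT) Hk) _ Hpo) in Hpc.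
- apply: coupledS_same => [|z|z]; rewrite ?EC ?EO ?(negbTE Hpc) ?(negbTE Hpo) // !in_fset1U.
  + by case: eqP => [->|]; rewrite ?(negbTE Hpc) ?andbF.
  + by case: eqP => [->|]; rewrite ?(negbTE Hpo) ?andbF.
- by have := fsubset_leq_card (notfull_run_sub HC HO (ltnW tT) Hk); lia.
- exact: coupledS_evict_hit Hpc Hq EC Hpo EO.
- by have := fsubset_leq_card (notfull_run_sub HO HC (ltnW tT) Hko); lia.
- case: (eqVneq q r) => [Eqr|qr]; last case: (boolP (q \in O t)) => Hqo.
  + subst r; apply: coupledS_same => [|z|z]; rewrite ?EC ?EO ?(negbTE Hpc) ?(negbTE Hpo) //.
      by rewrite !in_fset1U !in_fsetD1; solve_mem.
    by rewrite !in_fset1U !in_fsetD1; solve_mem.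
  + exact: coupledS_evict_evict_shared Hpc Hq EC Hpo Hr EO qr Hqo.
  + exact: coupledS_evict_evict_matched Hpc Hq EC Hpo Hr EO qr Hqo.
Qed.

End Step.

Lemma coupled0 : coupled 0.
Proof.
case: HC => C0 _; case: HO => O0 _.
by exists [::], [::], (fun _ => 0), (fun _ => 0); split; split=> // z; rewrite C0 O0 inE.
Qed.

Lemma coupled_run t : t <= T -> coupled t.
Proof.
elim: t => [_|t IH tT]; first exact: coupled0.
by have [M [E [col [cc HI]]]] := IH (ltnW tT); apply: coupledS_step HI.
Qed.

Lemma colored_graph_eviction_graph E col :
  colored_graph T E col -> eviction_graph T sigma C E.
Proof.
move=> HE; split; [exact: graph_uniq HE | | | exact: graph_target_inj HE].
- move=> e /(graph_edge HE) [u [_ /and4P[/andP[_ uT] _ _ Ie2] Ie1 _]].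
  move: Ie1 Ie2 => /and3P[/andP[? ?] _ _] /and3P[/andP[? ?] _ _].
  by apply/andP; split; apply/andP; split; lia.
- by move=> e /(graph_edge HE) [u [_ ? ? ?]]; exists u.
Qed.

Lemma colored_graph_colors E col :
  colored_graph T E col -> size (undup [seq col e | e <- E]) <= misses T sigma O.
Proof.
move=> HE; rewrite /misses -size_filter; apply: uniq_leq_size; first exact: undup_uniq.
move=> c; rewrite mem_undup => /mapP [e He ->].
have [? ?] := graph_color_miss HE He.
by rewrite mem_filter mem_iota; apply/andP; split; [|lia].
Qed.

End Coupling.

Theorem mainTheorem7 (k T : nat) (sigma : nat -> nat) (C : nat -> {fset nat})
  (OPT : nat) :
  valid_run k T sigma C -> is_OPT k T sigma OPT ->
  exists (E : seq (nat * nat)) (col : nat * nat -> nat),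
    [/\ eviction_graph T sigma C E,
        (forall e e', e \in E -> e' \in E -> col e = col e' -> e.1 = e'.1),
        (forall e e', e \in E -> e' \in E -> e <> e' -> e.1 = e'.1 ->
           col e = col e' -> no_overlap T sigma C e.2 e'.2),
        (size (undup [seq col e | e <- E]) <= OPT)%N &
        (misses T sigma C <= OPT + size E)%N].
Proof.
move=> HC [[O HO <-] _].
have [M [E [col [cc [_ HE _ Hcost]]]]] := coupled_run HC HO (leqnn T).
exists E, col; split.
- exact: colored_graph_eviction_graph HE.
- exact: graph_color_source HE.
- by move=> e e' He He' ne _; apply: graph_color_no_overlap HE _ _ He He' ne.
- exact: colored_graph_colors HE.
- lia.
Qed.
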